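(* Let $K$ be a nonempty compact subset of $\mathbb R^d$, let $n\ge1$ and $q\le0$. There exists $\nu_n\in\mathcal P(K)$ with finite support such that for every finitely supported $\mu=\sum_{i=1}^Np_i\delta_{x_i}\in\mathcal P(K)$ (with $p_i>0$) and every $\theta\in(0,1)$, the measure $\nu=(1-\theta)\mu+\theta\nu_n$ satisfies $$I_\nu(3\cdot2^{-n},q)\le N(1-\theta)^qa^q+\theta^q+\frac{\theta^q}{2^q}C_n(K)^{1-q},$$ where $a=\min_ip_i$. Moreover $\nu(B(x,3\cdot2^{-n}))>0$ for every $x\in K$.
   Context: $\mathcal P(K)$ is the set of Borel probability measures on $K$. Balls $B(x,r)$ are taken with respect to the $\ell^\infty$ norm on $\mathbb R^d$, and $I_\nu(r,q)=\int_K\nu(B(x,r))^{q-1}d\nu(x)$. $C_n(K)$ is the number of connected components of the union of the half-closed dyadic cubes $\prod_{j=1}^d[k_j2^{-n},(k_j+1)2^{-n})$, $k_j\in\mathbb Z$, that meet $K$. *)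

From HB Require Import structures.
From mathcomp Require Import all_boot all_order all_algebra.
From mathcomp Require Import all_classical all_reals all_analysis.
From mathcomp Require Import finmap.
Set Implicit Arguments. Unset Strict Implicit. Unset Printing Implicit Defensive.
Import Order.TTheory GRing.Theory Num.Theory numFieldNormedType.Exports.
Local Open Scope classical_set_scope.
Local Open Scope ring_scope.

Section Defs.
Variables (R : realType) (d : nat).
Notation pt := 'rV[R]_d.

Definition linf_ball (x : pt) (r : R) : set pt :=
  [set y | forall j : 'I_d, `|y ord0 j - x ord0 j| <= r].

Definition dyadic_cube (n : nat) (k : 'I_d -> int) : set pt :=
  [set y | forall j : 'I_d,
     (k j)%:~R / 2 ^+ n <= y ord0 j /\ y ord0 j < (k j + 1)%:~R / 2 ^+ n].

Definition dyadic_cover (K : set pt) (n : nat) : set pt :=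
  \bigcup_(k in [set k | dyadic_cube n k `&` K !=set0]) dyadic_cube n k.

(* C_n(K): number of connected components of the union of the cubes
   (0 by convention if there were infinitely many; never the case for compact K) *)
Definition Cn (K : set pt) (n : nat) : nat :=
  #|` fset_set (@connected_component pt (dyadic_cover K n) @` dyadic_cover K n) |%fset.

(* A finitely supported measure sum_i w_i delta_{x_i} given as a list of
   (atom, weight) pairs. *)
Definition dmeas := seq (pt * R).

Definition dmass (m : dmeas) (A : set pt) : R :=
  \sum_(p <- m) (if `[< A p.1 >] then p.2 else 0).

Definition dint (m : dmeas) (f : pt -> R) : R := \sum_(p <- m) p.2 * f p.1.

Definition Inu (m : dmeas) (r q : R) : R :=
  dint m (fun x => powR (dmass m (linf_ball x r)) (q - 1)).

Definition fs_prob (K : set pt) (m : dmeas) : Prop :=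
  (forall p, p \in m -> K p.1 /\ 0 < p.2) /\ \sum_(p <- m) p.2 = 1.

Definition dmix (t : R) (m1 m2 : dmeas) : dmeas :=
  [seq (p.1, (1 - t) * p.2) | p <- m1] ++ [seq (p.1, t * p.2) | p <- m2].

Definition minweight (m : dmeas) : R := \big[Order.min/1]_(p <- m) p.2.

End Defs.

From HB Require Import structures.
From mathcomp Require Import all_boot all_order all_algebra.
From mathcomp Require Import all_classical all_reals all_analysis.
From mathcomp Require Import finmap.
From mathcomp Require Import ring lra zify.
Import Order.TTheory GRing.Theory Num.Theory numFieldNormedType.Exports.
Local Open Scope classical_set_scope.
Local Open Scope ring_scope.

(* Let h = 2^-n.  Pick a point of K (an anchor) in each dyadic cube of side h meeting K,
   and join two cubes when their anchors are at sup-distance at most 2h.  Any two cubes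
   whose anchors lie in the same connected component of the union of the cubes are joined
   by a path, so the graph has at most C_n(K) components.  Put mass at least 1/(2P) on a
   root of each of the P components and mass delta_(t+1) = eta delta_t^(1-q) on a cube at
   distance t+1 from its root, where eta = 1/(2 #cubes).  The ball of radius 3h around an
   anchor contains the anchor of its parent, so a non-root atom contributes at most
   theta^q eta to I_nu, a root at most theta^q (2P)^-q, and an atom of mu at most
   ((1-theta) a)^q. *)

Set Implicit Arguments. Unset Strict Implicit. Unset Printing Implicit Defensive.

Section PowR.
Variable R : realType.

Lemma le_powR_nonpos (a b p : R) : 0 < a -> a <= b -> p <= 0 -> b `^ p <= a `^ p.
Proof.
move=> a0 ab p0; have b0 : 0 < b := lt_le_trans a0 ab.
by rewrite /powR (gt_eqF a0) (gt_eqF b0) ler_expR ler_wnM2l // ler_ln.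
Qed.

Lemma mulr_powRB1 (x p : R) : 0 < x -> x * x `^ (p - 1) = x `^ p.
Proof.
move=> x0; rewrite -{1}(powRr1 (ltW x0)) -powRD; first by rewrite addrC subrK.
by rewrite (gt_eqF x0) implybT.
Qed.

Lemma powRV (x p : R) : 0 < x -> x^-1 `^ p = (x `^ p)^-1.
Proof. by move=> x0; rewrite /powR invr_eq0 (gt_eqF x0) lnV ?posrE // mulrN expRN. Qed.

Lemma atom_energy_le (p w c m : R) : p <= 0 -> 0 < w -> 0 < c -> c <= m ->
  w * m `^ (p - 1) <= w * c `^ (p - 1).
Proof.
move=> p0 w0 c0 cm; rewrite ler_pM2l //; apply: le_powR_nonpos => //.
by rewrite subr_le0 (le_trans p0) ?ler01.
Qed.

End PowR.

Section DiscreteMeasures.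
Variables (R : realType) (d : nat).
Implicit Types (m : dmeas R d) (A : set 'rV[R]_d).

Lemma dmass_ge_atom m A p : (forall p, p \in m -> 0 <= p.2) ->
  p \in m -> A p.1 -> p.2 <= dmass m A.
Proof.
move=> m_ge0 pm Ap; rewrite /dmass (big_rem p pm) /= asboolT // lerDl.
rewrite big_seq sumr_ge0 // => p' /mem_rem p'm; case: asboolP => // _.
exact: m_ge0.
Qed.

Lemma minweight_le m p : p \in m -> minweight m <= p.2.
Proof. by move=> pm; rewrite /minweight (ge_bigmin_seq _ _ xpredT _ pm). Qed.

Lemma minweight_gt0 m : (forall p, p \in m -> 0 < p.2) -> 0 < minweight m.
Proof. by move=> m_gt0; rewrite /minweight big_seq; apply: lt_bigmin. Qed.

Lemma dmix_weight_ge0 K (t : R) m1 m2 : fs_prob K m1 -> fs_prob K m2 -> 0 <= t <= 1 ->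
  forall p, p \in dmix t m1 m2 -> 0 <= p.2.
Proof.
move=> [m1_gt0 _] [m2_gt0 _] /andP[t0 t1] p.
rewrite mem_cat => /orP[] /mapP[p' p'm ->] /=; apply: mulr_ge0.
- by rewrite subr_ge0.
- exact: ltW (m1_gt0 _ p'm).2.
- by [].
- exact: ltW (m2_gt0 _ p'm).2.
Qed.

Lemma Inu_dmix (t r q : R) m1 m2 :
  let f x := dmass (dmix t m1 m2) (linf_ball x r) `^ (q - 1) in
  Inu (dmix t m1 m2) r q =
    \sum_(p <- m1) (1 - t) * p.2 * f p.1 + \sum_(p <- m2) t * p.2 * f p.1.
Proof. by rewrite /Inu /dint {1}/dmix big_cat !big_map. Qed.

Lemma atoms_energy_le (c r q : R) m nu : 0 < c -> 0 <= r -> q <= 0 ->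
  (forall p, p \in m -> 0 < p.2) -> (forall p, p \in nu -> 0 <= p.2) ->
  (forall p, p \in m -> (p.1, c * p.2) \in nu) ->
  \sum_(p <- m) c * p.2 * dmass nu (linf_ball p.1 r) `^ (q - 1)
    <= (size m)%:R * c `^ q * minweight m `^ q.
Proof.
move=> c0 r0 q0 m_gt0 nu_ge0 m_nu.
apply: le_trans (_ : _ <= \sum_(p <- m) c `^ q * minweight m `^ q) _; last first.
  by rewrite big_const_seq count_predT iter_addr_0 -mulrA mulr_natl.
rewrite big_seq [X in _ <= X]big_seq; apply: ler_sum => p pm.
have w0 : 0 < c * p.2 by rewrite mulr_gt0 ?m_gt0.
apply: le_trans (atom_energy_le q0 w0 w0 _) _.
  apply: (dmass_ge_atom nu_ge0 (m_nu p pm)) => j /=.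
  by rewrite subrr normr0.
rewrite mulr_powRB1 // (powRM _ (ltW c0) (ltW (m_gt0 p pm))) ler_wpM2l ?powR_ge0 //.
exact: le_powR_nonpos (minweight_gt0 m_gt0) (minweight_le pm) q0.
Qed.

End DiscreteMeasures.

Section RowCoordinates.
Variables (R : realType) (d : nat).
Implicit Types x : 'rV[R]_d.

Lemma row_normrE x : `|x| = \big[Num.max/0]_ij `|x ij.1 ij.2|.
Proof. exact: mx_normrE. Qed.

Lemma row_coord_le_norm x j : `|x ord0 j| <= `|x|.
Proof.
by rewrite row_normrE; exact: (le_bigmax _ (fun ij : 'I_1 * 'I_d => `|x ij.1 ij.2|) (ord0, j)).
Qed.

Lemma row_norm_ltP x (e : R) : 0 < e -> `|x| < e <-> forall j, `|x ord0 j| < e.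
Proof.
move=> e0; split=> [xe j|xe]; first exact: le_lt_trans (row_coord_le_norm x j) xe.
by rewrite row_normrE; apply/bigmax_ltP; split=> // -[i j] _ /=; rewrite (ord1 i).
Qed.

Lemma ball_row_coordP x y (e : R) : 0 < e ->
  ball x e y <-> forall j, `|x ord0 j - y ord0 j| < e.
Proof.
move=> e0; rewrite -ball_normE /= row_norm_ltP //.
by split=> xy j; have := xy j; rewrite !mxE.
Qed.

Lemma compact_row_coord_bounded (K : set 'rV[R]_d) :
  compact K -> exists M : R, forall x, K x -> forall j, `|x ord0 j| <= M.
Proof.
move=> /compact_bounded [M [_ KM]]; exists (`|M| + 1) => x Kx j.
apply: le_trans (row_coord_le_norm x j) _; apply: KM => //.
by rewrite (le_lt_trans (ler_norm M)) // ltrDl.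
Qed.

End RowCoordinates.

Section DyadicCubes.
Variables (R : realType) (d n : nat).
Notation pt := 'rV[R]_d.
Implicit Types (x y : pt) (k : 'I_d -> int).

Lemma exists_dyadic_cube x : exists k, dyadic_cube n k x.
Proof.
exists (fun j => Num.floor (x ord0 j * 2 ^+ n)) => j.
have /andP[lo hi] := floor_itv (x ord0 j * 2 ^+ n).
by rewrite ler_pdivrMr ?exprn_gt0 // ltr_pdivlMr ?exprn_gt0.
Qed.

Lemma dyadic_cube_dist_lt k y y' : dyadic_cube n k y -> dyadic_cube n k y' ->
  forall j, `|y ord0 j - y' ord0 j| < 2 ^- n.
Proof.
move=> ky ky' j; have [a1 a2] := ky j; have [b1 b2] := ky' j.
move: a2 b2; rewrite intrD mulrDl mul1r => a2 b2.
by rewrite ltr_norml; apply/andP; split; lra.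
Qed.

Lemma dyadic_cube_index_bounded (M : R) (N : nat) k x :
  M * 2 ^+ n + 1 <= N%:R -> (forall j, `|x ord0 j| <= M) -> dyadic_cube n k x ->
  forall j, - (N%:Z) <= k j <= N%:Z.
Proof.
move=> MN xM kx j; have [lo hi] := kx j.
have pow_gt0 : (0 : R) < 2 ^+ n by rewrite exprn_gt0.
have := xM j; rewrite ler_norml => /andP[x1 x2].
rewrite ler_pdivrMr // in lo; rewrite ltr_pdivlMr // in hi.
have m1 : x ord0 j * 2 ^+ n <= M * 2 ^+ n by rewrite ler_pM2r.
have m2 : - M * 2 ^+ n <= x ord0 j * 2 ^+ n by rewrite ler_pM2r.
have kN : (k j)%:~R <= (N%:R : R) by lra.
have Nk : (- (N%:Z) - 1 : int)%:~R < (k j)%:~R :> R.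
  by rewrite intrB intrN; rewrite intrD in hi; lra.
apply/andP; split; last by rewrite -(ler_int R).
by move: Nk; rewrite ltr_int; lia.
Qed.

Lemma dyadic_cube_component (A : set pt) k y y' :
  dyadic_cube n k `<=` A -> dyadic_cube n k y -> dyadic_cube n k y' ->
  connected_component A y y'.
Proof.
move=> kA ky ky'.
pose f (t : R) := y + t *: (y' - y).
have f_cont : continuous f.
  move=> t; apply: (continuousD (@cst_continuous _ _ y t)).
  by apply: continuousZr_tmp; exact: cvg_id.
have seg_conn : connected (f @` `[0, 1]).
  apply: connected_continuous_connected; first exact: segment_connected.
  exact: continuous_subspaceT.
have seg_sub : f @` `[0, 1] `<=` A.
  move=> _ [t /= t01 <-]; apply: kA => j.
  move: t01; rewrite in_itv /= => /andP[t0 t1].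
  have [a1 a2] := ky j; have [b1 b2] := ky' j.
  rewrite /f !mxE; split; first nra.
  by case: (leP (y' ord0 j) (y ord0 j)) => ?; nra.
apply: (connected_component_max _ seg_sub seg_conn).
- by exists 0; rewrite /= ?in_itv /= ?lexx ?ler01 // /f scale0r addr0.
- by exists 1; rewrite /= ?in_itv /= ?lexx ?ler01 // /f scale1r addrC subrK.
Qed.

End DyadicCubes.

(* Dyadic cubes with indices in [-N, N]^d, coded by a finite type: the code [f] stands for
   the index [j |-> f j - N]. *)
Section CubeCodes.
Variables (d N : nat).

Definition cube_code := {ffun 'I_d -> 'I_(N.*2.+1)}.

Definition cube_index (f : cube_code) : 'I_d -> int := fun j => (f j : nat)%:Z - N%:Z.

Lemma cube_index_onto (k : 'I_d -> int) :
  (forall j, - (N%:Z) <= k j <= N%:Z) -> exists f : cube_code, cube_index f = k.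
Proof.
move=> kN; exists [ffun j => inord (absz (k j + N%:Z))].
apply: funext => j; have /andP[k1 k2] := kN j.
have kN0 : 0 <= k j + N%:Z by rewrite -lerBlDr sub0r.
rewrite /cube_index ffunE inordK; first by rewrite (gez0_abs kN0) addrK.
by rewrite ltnS -lez_nat (gez0_abs kN0) -addnn PoszD lerD.
Qed.

End CubeCodes.

Section CubeGraph.
Variables (R : realType) (d : nat) (K : set 'rV[R]_d) (n N : nat) (M : R).
Hypothesis K_bounded : forall x, K x -> forall j, `|x ord0 j| <= M.
Hypothesis MN : M * 2 ^+ n + 1 <= N%:R.
Notation pt := 'rV[R]_d.
Notation code := (cube_code d N).
Notation cover := (dyadic_cover K n).
Notation h := (2 ^- n : R).
Implicit Types (f g i j : code) (x y : pt).

Lemma h_gt0 : 0 < h.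
Proof. by rewrite invr_gt0 exprn_gt0. Qed.

Definition code_cube f : set pt := dyadic_cube n (cube_index f).

Definition meetsK f : bool := `[< code_cube f `&` K !=set0 >].

Definition anchor f : pt := xget 0 (code_cube f `&` K).

Definition adj : rel code := fun f g =>
  [&& meetsK f, meetsK g & [forall l, `|anchor f ord0 l - anchor g ord0 l| <= 2 * h]].

Lemma anchor_spec f : meetsK f -> code_cube f (anchor f) /\ K (anchor f).
Proof. by move=> /asboolP[x fx]; exact: (xgetI 0 fx). Qed.

Lemma cover_code y : cover y -> exists f, meetsK f /\ code_cube f y.
Proof.
move=> [k /= [x [kx Kx]] ky].
have [f fk] := cube_index_onto (dyadic_cube_index_bounded MN (K_bounded Kx) kx).
by exists f; rewrite /meetsK /code_cube fk; split=> //; apply/asboolP; exists x.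
Qed.

Lemma K_sub_cover : K `<=` cover.
Proof. by move=> x Kx; have [k kx] := exists_dyadic_cube n x; exists k => //; exists x. Qed.

Lemma code_cube_sub_cover f : meetsK f -> code_cube f `<=` cover.
Proof. by move=> /asboolP fK y fy; exists (cube_index f). Qed.

Lemma anchor_cover f : meetsK f -> cover (anchor f).
Proof. by move=> fK; apply: (code_cube_sub_cover fK); exact: (anchor_spec fK).1. Qed.

Lemma adj_sym : symmetric adj.
Proof.
move=> f g; apply/and3P/and3P => -[fK gK /forallP fg]; split=> //;
  by apply/forallP => l; rewrite distrC.
Qed.

Lemma adj_meetsK f g : adj f g -> meetsK f /\ meetsK g.
Proof. by case/and3P. Qed.

Lemma connect_meetsK f g : connect adj f g -> meetsK f -> meetsK g.
Proof.
case/connectP=> p; case/lastP: p => [_ -> //|p y].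
by rewrite rcons_path last_rcons => /andP[_ /adj_meetsK[_ ?]] -> _.
Qed.

Lemma adj_of_balls f g y : meetsK f -> meetsK g ->
  ball (anchor f) h y -> ball (anchor g) h y -> adj f g.
Proof.
move=> fK gK /(ball_row_coordP _ _ h_gt0) fy /(ball_row_coordP _ _ h_gt0) gy.
rewrite /adj fK gK; apply/forallP => l.
apply: le_trans (ler_distD (y ord0 l) _ _) _.
by rewrite mulr2n mulrDl mul1r lerD // ?ltW // distrC.
Qed.

Lemma cover_ball y : cover y -> exists f, meetsK f /\ ball (anchor f) h y.
Proof.
move=> /cover_code[f [fK fy]]; exists f; split=> //.
apply/(ball_row_coordP _ _ h_gt0).
exact: dyadic_cube_dist_lt (anchor_spec fK).1 fy.
Qed.

Lemma cover_component_anchor y : cover y -> exists f, meetsK f /\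
  connected_component cover y = connected_component cover (anchor f).
Proof.
move=> /cover_code[f [fK fy]]; exists f; split=> //.
apply: same_connected_component.
exact: dyadic_cube_component (code_cube_sub_cover fK) fy (anchor_spec fK).1.
Qed.

Lemma cover_components_finite : finite_set (connected_component cover @` cover).
Proof.
apply: (@sub_finite_set _ _
  ((fun f => connected_component cover (anchor f)) @` [set f | meetsK f])).
  by move=> _ [y /cover_component_anchor[f [fK ->]] <-]; exists f.
exact/finite_image/finite_finset.
Qed.

Definition class_balls i : set pt :=
  \bigcup_(g in [set g | meetsK g && connect adj i g]) ball (anchor g) h.

(* The balls around the anchors of the [adj]-class of [i] and those around all other
   anchors are disjoint open sets covering [cover]. *)
Lemma component_sub_class_balls i : meetsK i ->
  connected_component cover (anchor i) `<=` class_balls i.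
Proof.
move=> iK.
pose others := \bigcup_(g in [set g | meetsK g && ~~ connect adj i g]) ball (anchor g) h.
have disj y : class_balls i y -> others y -> False.
  move=> [g /= /andP[gK ig] gy] [g' /= /andP[g'K /negP ig'] g'y].
  exact/ig'/(connect_trans ig)/connect1/(adj_of_balls gK g'K gy g'y).
have covered y : cover y -> class_balls i y \/ others y.
  move=> /cover_ball[g [gK gy]].
  by case ig: (connect adj i g); [left | right]; exists g => //=; rewrite gK ig.
have open_balls (P : set code) : open (\bigcup_(g in P) ball (anchor g) h).
  by apply: bigcup_open => g _; exact: ball_open.
set C := connected_component cover (anchor i).
have C_sub : C `<=` cover by exact: connected_component_sub.
suff <- : C `&` class_balls i = C by move=> y [].
apply: (component_connected (x := anchor i)).
- exists (anchor i); split; first exact/connected_component_refl/anchor_cover.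
  by exists i; [rewrite /= iK connect0 | exact: ballxx h_gt0].
- by exists (class_balls i); first exact: open_balls.
- exists (~` others); first exact/open_closedC/open_balls.
  apply/seteqP; split=> y [Cy yi]; split=> //; first by move/(disj y yi).
  by case: (covered y (C_sub y Cy)).
Qed.

Lemma same_component_connect i j : meetsK i -> meetsK j ->
  connected_component cover (anchor i) = connected_component cover (anchor j) ->
  connect adj i j.
Proof.
move=> iK jK Cij.
have : class_balls i (anchor j).
  apply: component_sub_class_balls => //; rewrite Cij.
  exact/connected_component_refl/anchor_cover.
move=> [g /= /andP[gK ig] gj]; apply: connect_trans ig (connect1 _).
exact: adj_of_balls gK jK gj (ballxx _ h_gt0).
Qed.

Lemma adj_connect_sym : connect_sym adj.
Proof. exact/sym_connect_sym/adj_sym. Qed.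

Definition is_root i : bool := meetsK i && (fingraph.root adj i == i).

Lemma card_roots_le_Cn : (#|is_root| <= Cn K n)%N.
Proof.
set s := [seq i <- enum code | is_root i].
have -> : #|is_root| = size s.
  by rewrite cardE /s /enum_mem -filter_predI; congr size; apply: eq_filter => x; rewrite /= andbT.
rewrite /Cn -(size_map (fun i => connected_component cover (anchor i))).
apply: uniq_leq_size.
  rewrite map_inj_in_uniq; first by rewrite filter_uniq // enum_uniq.
  move=> i j; rewrite !mem_filter => /andP[/andP[iK /eqP ri] _] /andP[/andP[jK /eqP rj] _].
  move=> /(same_component_connect iK jK).
  by rewrite -(root_connect adj_connect_sym) ri rj => /eqP.
move=> C /mapP[i]; rewrite mem_filter => /andP[/andP[iK _] _] ->.
rewrite in_fset_set; last exact: cover_components_finite.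
by rewrite in_setE; exists (anchor i) => //; exact: anchor_cover.
Qed.

Lemma exists_root : K !=set0 -> exists i, is_root i.
Proof.
move=> [x /K_sub_cover /cover_code[f [fK _]]].
exists (fingraph.root adj f); rewrite /is_root (root_root adj_connect_sym) eqxx andbT.
exact: connect_meetsK (connect_root _ f) fK.
Qed.

Definition depth_path i (t : nat) : Prop :=
  exists p, [/\ size p = t, path adj (fingraph.root adj i) p & last (fingraph.root adj i) p = i].

Lemma exists_depth_path i : exists t, `[< depth_path i t >].
Proof.
have /connectP[p ip pi] : connect adj (fingraph.root adj i) i.
  by rewrite adj_connect_sym connect_root.
by exists (size p); apply/asboolP; exists p.
Qed.

Definition depth i : nat := ex_minn (exists_depth_path i).

Lemma depth_gt0 i : meetsK i -> ~~ is_root i -> (0 < depth i)%N.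
Proof.
rewrite /is_root => -> /=; rewrite /depth; case: ex_minnP => t /asboolP[p [<- _ pi]] _ ri.
by case: p pi => [/= ir|//]; rewrite ir eqxx in ri.
Qed.

Lemma parent_exists i : meetsK i -> ~~ is_root i ->
  exists j, adj j i /\ (depth j <= (depth i).-1)%N.
Proof.
move=> iK ri; have := depth_gt0 iK ri; rewrite /depth.
case: ex_minnP => t /asboolP[p [<- ip pi]] _.
case/lastP: p ip pi => [//|p y]; rewrite rcons_path last_rcons size_rcons /=.
move=> /andP[ip jy] yi _; set j := last (fingraph.root adj i) p in jy.
have rj : fingraph.root adj j = fingraph.root adj i.
  have ij : connect adj (fingraph.root adj i) j by apply/connectP; exists p.
  by rewrite -(fingraph.rootP adj_connect_sym ij) (root_root adj_connect_sym).
exists j; split; first by rewrite -yi.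
rewrite /depth; case: ex_minnP => t' _; apply; apply/asboolP.
by exists p; rewrite rj.
Qed.

End CubeGraph.


Section CubeWeights.
Variables (R : realType) (d : nat) (K : set 'rV[R]_d) (n N : nat) (M : R).
Hypothesis K_bounded : forall x, K x -> forall j, `|x ord0 j| <= M.
Hypothesis MN : M * 2 ^+ n + 1 <= N%:R.
Variable q : R.
Hypothesis q_le0 : q <= 0.
Hypothesis K_neq0 : K !=set0.
Notation code := (cube_code d N).
Notation meets := (meetsK K n (N:=N)).
Notation root := (is_root K n (N:=N)).
Notation depth := (depth K n (N:=N)).
Notation anchor := (anchor K n (N:=N)).
Implicit Types i j : code.

Definition nroots : nat := #|root|.
Definition ncubes : nat := #|meets|.
Definition eta : R := (2 * ncubes%:R)^-1.

(* Chosen so that [delta t.+1 * delta t `^ (q - 1) = eta]. *)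
Fixpoint delta (t : nat) : R :=
  if t is t'.+1 then eta * delta t' `^ (1 - q) else (2 * nroots%:R)^-1.

Definition nonroot_mass : R := \sum_(i | meets i && ~~ root i) delta (depth i).
Definition root_weight : R := (1 - nonroot_mass) / nroots%:R.
Definition weight i : R := if root i then root_weight else delta (depth i).

Definition nu_n : dmeas R d :=
  [seq (anchor i, weight i) | i <- [seq i <- enum code | meets i]].

Lemma nroots_gt0 : (0 < nroots)%N.
Proof. by have [i ri] := exists_root K_bounded MN K_neq0; apply/card_gt0P; exists i. Qed.

Lemma ncubes_gt0 : (0 < ncubes)%N.
Proof.
apply: leq_trans nroots_gt0 (subset_leq_card _).
by apply/fintype.subsetP => i /andP[].
Qed.

Lemma nroots_ge1 : (1 : R) <= nroots%:R.
Proof. by rewrite ler1n nroots_gt0. Qed.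

Lemma eta_gt0 : 0 < eta.
Proof. by rewrite invr_gt0 mulr_gt0 // ltr0n ncubes_gt0. Qed.

Lemma eta_le1 : eta <= 1.
Proof.
have ncubes_ge1 : (1 : R) <= ncubes%:R by rewrite ler1n ncubes_gt0.
by rewrite invf_le1 ?mulr_gt0 ?ltr0n ?ncubes_gt0 //; lra.
Qed.

Lemma delta0_bounds : 0 < delta 0 <= 1.
Proof.
have := nroots_ge1; rewrite /= invr_gt0 => P1.
by rewrite invf_le1; lra.
Qed.

Lemma delta_bounds t : 0 < delta t <= 1.
Proof.
elim: t => [|t /andP[dt0 dt1]]; first exact: delta0_bounds.
have : delta t `^ (1 - q) <= delta t.
  by apply: ge1r_powR; rewrite ?dt0 ?dt1 // lerDl oppr_ge0.
have := powR_gt0 (1 - q) dt0; have := eta_le1; have := eta_gt0; rewrite /=; nra.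
Qed.

Lemma delta_S_le t : delta t.+1 <= delta t /\ delta t.+1 <= eta.
Proof.
have /andP[dt0 dt1] := delta_bounds t.
have pow_le : delta t `^ (1 - q) <= delta t.
  by apply: ge1r_powR; rewrite ?dt0 ?dt1 // lerDl oppr_ge0.
have := powR_gt0 (1 - q) dt0; have := eta_le1; have := eta_gt0; rewrite /=; split; nra.
Qed.

Lemma delta_antitone s t : (s <= t)%N -> delta t <= delta s.
Proof.
move=> /subnK <-; elim: (t - s)%N => [|k IH]; first by rewrite add0n.
by rewrite addSn; apply: le_trans IH; exact: (delta_S_le _).1.
Qed.

Lemma nonroot_mass_bounds : 0 <= nonroot_mass <= 2^-1.
Proof.
apply/andP; split.
  by apply: sumr_ge0 => i _; case/andP: (delta_bounds (depth i)) => /ltW.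
apply: (@le_trans _ _ (\sum_(i | meets i) eta)).
  rewrite /nonroot_mass big_mkcondr /=; apply: ler_sum => i iK.
  case: ifP => ri; last exact: ltW eta_gt0.
  by have := depth_gt0 iK ri; case: (depth i) => // t _; exact: (delta_S_le t).2.
rewrite sumr_const -/ncubes /eta -[X in X <= _]mulr_natr invfM -mulrA mulVf ?mulr1 //.
by rewrite pnatr_eq0 -lt0n ncubes_gt0.
Qed.

Lemma root_weight_ge : delta 0 <= root_weight.
Proof.
have /andP[_ mass_le] := nonroot_mass_bounds; have := nroots_ge1 => P1.
by rewrite /root_weight /= invfM ler_pM2r ?invr_gt0; lra.
Qed.

Lemma weight_gt0 i : 0 < weight i.
Proof.
rewrite /weight; case: ifP => _; last by case/andP: (delta_bounds (depth i)).
by apply: lt_le_trans root_weight_ge; case/andP: delta0_bounds.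
Qed.

Lemma weight_ge_delta i s : (depth i <= s)%N -> delta s <= weight i.
Proof.
move=> di; rewrite /weight; case: ifP => _; last exact: delta_antitone.
exact: le_trans (delta_antitone (leq0n s)) root_weight_ge.
Qed.

Lemma sum_weight : \sum_(i | meets i) weight i = 1.
Proof.
rewrite (bigID root) /=.
rewrite (eq_bigr (fun=> root_weight)); last by move=> i /andP[_ ri]; rewrite /weight ri.
rewrite [X in _ + X](eq_bigr (fun i => delta (depth i))); last first.
  by move=> i /andP[_ /negbTE ri]; rewrite /weight ri.
rewrite sumr_const; have -> : #|[pred i | meets i && root i]| = nroots.
  by apply: eq_card => i; rewrite !inE andb_idl // => /andP[].
rewrite /root_weight -[X in X + _]mulr_natr divfK ?subrK //.
by rewrite pnatr_eq0 -lt0n nroots_gt0.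
Qed.

Lemma nu_n_prob : fs_prob K nu_n.
Proof.
split; last by rewrite big_map big_filter big_enum_cond /= sum_weight.
move=> p /mapP[i]; rewrite mem_filter => /andP[iK _] -> /=.
by split; [exact: (anchor_spec iK).2 | exact: weight_gt0].
Qed.

Lemma nu_n_atom i : meets i -> (anchor i, weight i) \in nu_n.
Proof.
by move=> iK; apply: (map_f (fun i => (anchor i, weight i))); rewrite mem_filter iK mem_enum.
Qed.

Section Energy.
Variables (theta r : R) (nu : dmeas R d).
Hypothesis theta_gt0 : 0 < theta.
Hypothesis r_ge : 2 * 2 ^- n <= r.
Hypothesis nu_ge0 : forall p, p \in nu -> 0 <= p.2.
Notation energy x := (dmass nu (linf_ball x r) `^ (q - 1)).
Hypothesis nu_atoms : forall i, meets i -> (anchor i, theta * weight i) \in nu.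

Lemma h_le_r : 2 ^- n <= r.
Proof. by apply: le_trans r_ge; rewrite ler_peMl ?ler1n // invr_ge0 exprn_ge0. Qed.

Lemma dmass_ball_anchor_ge i (y : 'rV[R]_d) : meets i ->
  linf_ball y r (anchor i) -> theta * weight i <= dmass nu (linf_ball y r).
Proof. by move=> iK; exact: dmass_ge_atom nu_ge0 (nu_atoms iK). Qed.

Lemma root_energy_le i : root i -> theta * weight i * energy (anchor i) <= theta `^ q * delta 0 `^ q.
Proof.
move=> ri; have iK : meets i by case/andP: ri.
have w0 : 0 < theta * weight i by rewrite mulr_gt0 ?weight_gt0.
apply: le_trans (atom_energy_le q_le0 w0 w0 _) _.
  by apply: dmass_ball_anchor_ge => // l; rewrite subrr normr0 (le_trans (ltW (h_gt0 R n))) ?h_le_r.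
rewrite mulr_powRB1 // (powRM _ (ltW theta_gt0) (ltW (weight_gt0 i))).
rewrite ler_wpM2l ?powR_ge0 //.
apply: le_powR_nonpos => //; first by case/andP: delta0_bounds.
by rewrite /weight ri; exact: root_weight_ge.
Qed.

Lemma nonroot_energy_le i : meets i -> ~~ root i ->
  theta * weight i * energy (anchor i) <= theta `^ q * eta.
Proof.
move=> iK ri; have [j [ji dj]] := parent_exists iK ri; have [jK _] := adj_meetsK ji.
set s := (depth i).-1 in dj.
have ds0 : 0 < delta s by case/andP: (delta_bounds s).
have wi : weight i = eta * delta s `^ (1 - q).
  by rewrite /weight (negbTE ri) -[in LHS](prednK (depth_gt0 iK ri)).
have c0 : 0 < theta * delta s by rewrite mulr_gt0.
have w0 : 0 < theta * weight i by rewrite mulr_gt0 ?weight_gt0.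
apply: le_trans (atom_energy_le q_le0 w0 c0 _) _.
  apply: le_trans (dmass_ball_anchor_ge jK _); first by rewrite ler_pM2l // weight_ge_delta.
  by move=> l; move: ji => /and3P[_ _ /forallP/(_ l)] /le_trans; apply.
have pow_cancel : delta s `^ (1 - q) * delta s `^ (q - 1) = 1.
  rewrite -powRD; last by rewrite (gt_eqF ds0) implybT.
  by rewrite addrA subrK subrr powRr0.
rewrite wi (powRM _ (ltW theta_gt0) (ltW ds0)) -(mulr_powRB1 q theta_gt0).
set A := delta s `^ (1 - q) in pow_cancel *; set B := delta s `^ (q - 1) in pow_cancel *.
have -> : theta * (eta * A) * (theta `^ (q - 1) * B) = theta * theta `^ (q - 1) * eta * (A * B).
  by ring.
by rewrite pow_cancel mulr1.
Qed.

Lemma nroots_delta0_le :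
  nroots%:R * delta 0 `^ q <= (Cn K n)%:R `^ (1 - q) / 2 `^ q.
Proof.
set P := nroots.
have P0 : (0 : R) < P%:R by rewrite ltr0n nroots_gt0.
rewrite /= powRV ?mulr_gt0 // powRM ?ler0n // invfM mulrA mulrAC.
rewrite -[X in X / _ / _](powRr1 (ltW P0)) -powRB; last by rewrite (gt_eqF P0) implybT.
rewrite ler_pM2r ?invr_gt0 ?powR_gt0 //.
apply: ge0_ler_powR; rewrite ?nnegrE ?ler0n ?ler_nat //; last exact: card_roots_le_Cn K_bounded MN.
by rewrite subr_ge0 (le_trans q_le0).
Qed.

Lemma nu_n_energy_le :
  \sum_(p <- nu_n) theta * p.2 * energy p.1
    <= theta `^ q + theta `^ q / 2 `^ q * (Cn K n)%:R `^ (1 - q).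
Proof.
rewrite big_map big_filter big_enum_cond /=.
apply: le_trans (_ : _ <= \sum_(i | meets i)
  theta `^ q * ((if root i then delta 0 `^ q else 0) + eta)) _.
  apply: ler_sum => i iK; case: ifPn => ri.
    by rewrite mulrDr (le_trans (root_energy_le ri)) // lerDl mulr_ge0 ?powR_ge0 ?ltW ?eta_gt0.
  by rewrite add0r nonroot_energy_le.
rewrite -mulr_sumr big_split -big_mkcondr !sumr_const.
have -> : #|[pred i | meets i && root i]| = nroots.
  by apply: eq_card => i; rewrite !inE andb_idl // => /andP[].
have -> : eta *+ #|meets| = 2^-1.
  rewrite -/ncubes /eta -[X in X = _]mulr_natr invfM -mulrA mulVf ?mulr1 //.
  by rewrite pnatr_eq0 -lt0n ncubes_gt0.
have -> : theta `^ q + theta `^ q / 2 `^ q * (Cn K n)%:R `^ (1 - q)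
    = theta `^ q * ((Cn K n)%:R `^ (1 - q) / 2 `^ q + 1) by ring.
rewrite ler_wpM2l ?powR_ge0 // -[_ *+ nroots]mulr_natl lerD ?nroots_delta0_le //.
by rewrite invf_le1 ?ler1n.
Qed.

Lemma dmass_ball_gt0 x : K x -> 0 < dmass nu (linf_ball x r).
Proof.
move=> /K_sub_cover /(cover_code K_bounded MN)[f [fK fx]].
apply: lt_le_trans (dmass_ball_anchor_ge fK _); first by rewrite mulr_gt0 ?weight_gt0.
move=> l; apply/ltW/(lt_le_trans _ h_le_r).
exact: dyadic_cube_dist_lt (anchor_spec fK).1 fx l.
Qed.

End Energy.

End CubeWeights.

Unset Implicit Arguments.

Theorem lemma2p14 (R : realType) (d : nat) (K : set 'rV[R]_d) (n : nat) (q : R) :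
  @compact [the topologicalType of 'rV[R]_d] K -> K !=set0 -> (1 <= n)%N -> q <= 0 ->
  exists nun : dmeas R d,
    fs_prob K nun /\
    forall (mu : dmeas R d) (theta : R),
      fs_prob K mu -> uniq [seq p.1 | p <- mu] ->
      0 < theta < 1 ->
      let nu := dmix theta mu nun in
      let r := 3 / 2 ^+ n in
      Inu nu r q <=
        (size mu)%:R * powR (1 - theta) q * powR (minweight mu) q
        + powR theta q
        + powR theta q / powR 2 q * powR (Cn K n)%:R (1 - q)
      /\ (forall x, K x -> 0 < dmass nu (linf_ball x r)).
Proof.
move=> cK K_neq0 _ q_le0.
have [M K_bounded] := compact_row_coord_bounded cK.
pose N := (Num.truncn (M * 2 ^+ n + 1)).+1.
have MN : M * 2 ^+ n + 1 <= N%:R by exact/ltW/truncnS_gt.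
have nu_n_prob := nu_n_prob K_bounded MN q_le0 K_neq0.
exists (nu_n K n N q); split=> // mu theta mu_prob _ /andP[theta_gt0 theta_lt1] nu r.
have nu_ge0 : forall p, p \in nu -> 0 <= p.2.
  by apply: dmix_weight_ge0 mu_prob nu_n_prob _; rewrite !ltW.
have nu_atoms (i : cube_code d N) : meetsK K n i -> (anchor K n i, theta * weight K n q i) \in nu.
  by move=> iK; rewrite mem_cat (map_f (fun p => (p.1, theta * p.2)) (nu_n_atom q iK)) orbT.
have r_ge : 2 * 2 ^- n <= r by rewrite ler_pM2r ?invr_gt0 ?exprn_gt0 // ler_nat.
split; last exact: (dmass_ball_gt0 K_bounded MN q_le0 K_neq0 theta_gt0 r_ge nu_ge0 nu_atoms).
rewrite Inu_dmix -addrA; apply: lerD.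
- apply: atoms_energy_le nu_ge0 _ => //.
  + by rewrite subr_gt0.
  + by rewrite divr_ge0 ?exprn_ge0.
  + by move=> p /(proj1 mu_prob) [].
  + by move=> p pm; rewrite mem_cat (map_f (fun p => (p.1, (1 - theta) * p.2)) pm).
- exact: (nu_n_energy_le K_bounded MN q_le0 K_neq0 theta_gt0 r_ge nu_ge0 nu_atoms).
Qed.
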